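(* Let $p>2$ be a prime, let $b\in\mathbb{Q}_p$ with $0<|b|_p<1$, let $f(x)=\frac{x^2}{bx+1}$ for $x\in\mathbb{Q}_p\setminus\{-\frac1b\}$, let $x_2=\frac{1}{1-b}$, and let $0<\rho<1$. Then for every ball $B_r(y)\subset S_\rho(x_2)$ with $r<\rho$, $$B_r(y)\cap B_r(f(y))=\emptyset.$$
   Context: $|\cdot|_p$ is the $p$-adic norm on $\mathbb{Q}_p$. For $c\in\mathbb{Q}_p$ and $r>0$: $B_r(c)=\{x\in\mathbb{Q}_p:|x-c|_p<r\}$ and $S_r(c)=\{x\in\mathbb{Q}_p:|x-c|_p=r\}$. *)

(* Such (K,|.|) is exactly the completion of Q for |.|_p, i.e. Q_p
   up to isometric isomorphism. *)
From HB Require Import structures.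
From mathcomp Require Import all_boot all_order all_algebra.
From mathcomp Require Import reals.
Set Implicit Arguments. Unset Strict Implicit. Unset Printing Implicit Defensive.
Import Order.TTheory GRing.Theory Num.Theory.
Local Open Scope ring_scope.

Definition padic_abs (R : realType) (p : nat) (q : rat) : R :=
  if q == 0 then 0
  else (p%:R ^+ (logn p `|denq q|%N)) / (p%:R ^+ (logn p `|numq q|%N)).

Definition is_Qp (R : realType) (p : nat) (K : fieldType) (nrm : K -> R) : Prop :=
  (forall x, 0 <= nrm x) /\
  (forall x, nrm x = 0 <-> x = 0) /\
  (forall x y, nrm (x * y) = nrm x * nrm y) /\
  (forall x y, nrm (x + y) <= Num.max (nrm x) (nrm y)) /\
  (forall q : rat, nrm (ratr q) = padic_abs R p q) /\
  (forall (x : K) (eps : R), 0 < eps -> exists q : rat, nrm (x - ratr q) < eps) /\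
  (forall u : nat -> K,
     (forall eps : R, 0 < eps -> exists N, forall m n, (N <= m)%N -> (N <= n)%N ->
        nrm (u m - u n) < eps) ->
     exists l : K, forall eps : R, 0 < eps -> exists N, forall n, (N <= n)%N ->
        nrm (u n - l) < eps).

Definition pball (R : realType) (K : fieldType) (nrm : K -> R) (c : K) (r : R) (x : K) : Prop :=
  nrm (x - c) < r.
Definition psphere (R : realType) (K : fieldType) (nrm : K -> R) (c : K) (r : R) (x : K) : Prop :=
  nrm (x - c) = r.

Definition fb (K : fieldType) (b x : K) : K := x ^+ 2 / (b * x + 1).

(* Every point [y] of the unit ball around [x2 = 1/(1-b)] is moved by [f] by
   exactly its distance to [x2]: [f y - y = y (1-b) (y - x2) / (b y + 1)] and,
   the absolute value being ultrametric with [|b| < 1], the factors [y],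
   [1 - b] and [b y + 1] all have absolute value 1.  A point [y] of [S_rho(x2)]
   is thus at distance [rho > r] from [f y], and two balls of radius [r] whose
   centres are at distance at least [r] are disjoint. *)
From HB Require Import structures.
From mathcomp Require Import all_boot all_order all_algebra.
From mathcomp Require Import reals.
From mathcomp Require Import ring.
Import Order.TTheory GRing.Theory Num.Theory.
Local Open Scope ring_scope.
Set Implicit Arguments. Unset Strict Implicit.

Lemma fb_subr (K : fieldType) (b y : K) :
  b * y + 1 != 0 -> 1 - b != 0 ->
  fb b y - y = y * (1 - b) * (y - (1 - b)^-1) / (b * y + 1).
Proof. by move=> by1_neq0 b1_neq0; rewrite /fb; field; rewrite by1_neq0 b1_neq0. Qed.

Section UltrametricAbs.

Variables (R : realType) (K : fieldType) (nrm : K -> R).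
Hypothesis nrm_ge0 : forall x, 0 <= nrm x.
Hypothesis nrm_eq0 : forall x, nrm x = 0 <-> x = 0.
Hypothesis nrmM : forall x y, nrm (x * y) = nrm x * nrm y.
Hypothesis nrmD_max : forall x y, nrm (x + y) <= Num.max (nrm x) (nrm y).

Lemma nrm0 : nrm 0 = 0.
Proof. exact/nrm_eq0. Qed.

Lemma nrm_eq0b x : (nrm x == 0) = (x == 0).
Proof. by apply/eqP/eqP => /nrm_eq0. Qed.

Lemma nrm1 : nrm 1 = 1.
Proof.
have nrm1_neq0 : nrm 1 != 0 by rewrite nrm_eq0b oner_eq0.
by apply: (mulfI nrm1_neq0); rewrite -nrmM !mulr1.
Qed.

Lemma nrmN x : nrm (- x) = nrm x.
Proof.
have nrmN1 : nrm (-1) = 1.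
  by apply/eqP; rewrite -(sqrp_eq1 (nrm_ge0 _)) expr2 -nrmM mulrNN mulr1 nrm1.
by rewrite -mulN1r nrmM nrmN1 mul1r.
Qed.

Lemma nrmV x : x != 0 -> nrm x^-1 = (nrm x)^-1.
Proof.
move=> x_neq0; have nrmx_neq0 : nrm x != 0 by rewrite nrm_eq0b.
by apply: (mulfI nrmx_neq0); rewrite -nrmM !mulfV // nrm1.
Qed.

Lemma nrmB_max x y : nrm (x - y) <= Num.max (nrm x) (nrm y).
Proof. by rewrite -(nrmN y). Qed.

Lemma ultra_nrmD_eq x y : nrm x < nrm y -> nrm (y + x) = nrm y.
Proof.
move=> lt_xy; apply/eqP; rewrite eq_le; apply/andP; split.
  by apply: le_trans (nrmD_max _ _) _; rewrite ge_max lexx ltW.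
have := nrmB_max (y + x) x; rewrite addrK le_max => /orP[//|le_yx].
by move: lt_xy; rewrite ltNge le_yx.
Qed.

Lemma pball_disjoint c1 c2 r x :
  r <= nrm (c2 - c1) -> ~ (pball nrm c1 r x /\ pball nrm c2 r x).
Proof.
rewrite /pball => le_r [lt1 lt2].
have : nrm (c2 - c1) < r.
  have -> : c2 - c1 = (x - c1) - (x - c2) by ring.
  by apply: le_lt_trans (nrmB_max _ _) _; rewrite gt_max lt1.
by rewrite ltNge le_r.
Qed.

Lemma nrm_fb_subr b y :
  nrm b < 1 -> nrm (y - (1 - b)^-1) < 1 ->
  nrm (fb b y - y) = nrm (y - (1 - b)^-1).
Proof.
move=> b_lt1 y_near.
have nrm_1b : nrm (1 - b) = 1 by rewrite ultra_nrmD_eq nrm1 // nrmN.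
have b1_neq0 : 1 - b != 0 by rewrite -nrm_eq0b nrm_1b oner_eq0.
have nrm_x2 : nrm (1 - b)^-1 = 1 by rewrite nrmV // nrm_1b invr1.
have nrm_y : nrm y = 1.
  have -> : y = (1 - b)^-1 + (y - (1 - b)^-1) by rewrite addrC subrK.
  by rewrite ultra_nrmD_eq nrm_x2.
have nrm_by1 : nrm (b * y + 1) = 1 by rewrite addrC ultra_nrmD_eq nrm1 // nrmM nrm_y mulr1.
have by1_neq0 : b * y + 1 != 0 by rewrite -nrm_eq0b nrm_by1 oner_eq0.
by rewrite fb_subr // !nrmM nrmV // nrm_y nrm_1b nrm_by1 !mul1r divr1.
Qed.

Lemma fb_ball_disjoint b y r x :
  nrm b < 1 -> nrm (y - (1 - b)^-1) < 1 -> r <= nrm (y - (1 - b)^-1) ->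
  ~ (pball nrm y r x /\ pball nrm (fb b y) r x).
Proof. by move=> b_lt1 y_near le_r; apply: pball_disjoint; rewrite nrm_fb_subr. Qed.

End UltrametricAbs.

Theorem lemma4p2 (R : realType) (p : nat) (K : fieldType) (nrm : K -> R) :
  prime p -> (2 < p)%N -> is_Qp p nrm ->
  forall b : K, 0 < nrm b -> nrm b < 1 ->
  forall rho : R, 0 < rho -> rho < 1 ->
  forall (y : K) (r : R), 0 < r -> r < rho ->
  (forall x, pball nrm y r x -> psphere nrm ((1 - b)^-1) rho x) ->
  forall x, ~ (pball nrm y r x /\ pball nrm (fb b y) r x).
Proof.
move=> _ _ [nrm_ge0 [nrm_eq0 [nrmM [nrmD_max _]]]] b _ b_lt1 rho _ rho_lt1
  y r r_gt0 r_lt_rho ball_in_sphere x.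
have y_sphere : nrm (y - (1 - b)^-1) = rho.
  by apply: ball_in_sphere; rewrite /pball subrr nrm0.
apply: (fb_ball_disjoint nrm_ge0 nrm_eq0 nrmM nrmD_max b_lt1); rewrite y_sphere //.
exact: ltW.
Qed.
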